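(* Let $I\subset\mathbb{R}$ be an open interval, $s_0\in I$, and let $(\kappa_1,\kappa_2):I\to\mathbb{R}^2$ be continuous with an isolated zero at $s_0$, i.e. $(\kappa_1(s_0),\kappa_2(s_0))=(0,0)$ and $(\kappa_1(s),\kappa_2(s))\neq(0,0)$ for $s\neq s_0$ in $I$. Then the following are equivalent: (i) there exist a neighborhood $D\subset I$ of $s_0$ and continuous functions $\tilde r,\tilde\theta:D\to\mathbb{R}$ with $(\tilde r(s)\cos\tilde\theta(s),\,\tilde r(s)\sin\tilde\theta(s))=(\kappa_1(s),\kappa_2(s))$ for all $s\in D$; (ii) both $\theta^+$ and $\theta^-$ (defined in the context) exist and $\theta^+=\theta^-$.
   Context: Define $\hat\theta:\mathbb{R}^2\setminus\{(0,0)\}\to(-\tfrac{\pi}{2},\tfrac{\pi}{2}]$ by $\hat\theta(x,y)=\tan^{-1}(y/x)$ if $x\neq0$ and $\hat\theta(0,y)=\tfrac{\pi}{2}$ for $y\neq 0$ (so $\hat\theta$ is the angle of the line through the origin and $(x,y)$, taken in $(-\pi/2,\pi/2]$). Let $R(x,y)=\big(\tfrac{\sqrt2}{2}(x-y),\,\tfrac{\sqrt2}{2}(x+y)\big)$ be rotation by $\pi/4$. Set $\hat\theta^+:=\lim_{s\to s_0^+}\hat\theta(\kappa_1(s),\kappa_2(s))$ and $\hat\theta^+_{\pi/2}:=\lim_{s\to s_0^+}\hat\theta\big(R(\kappa_1(s),\kappa_2(s))\big)$ (these limits may fail to exist). Define $\theta^+:=\hat\theta^+$ if $\hat\theta^+$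 exists and $-\tfrac{\pi}{2}<\hat\theta^+<\tfrac{\pi}{2}$; $\theta^+:=\tfrac{\pi}{2}$ if $\hat\theta^+_{\pi/2}$ exists and equals $-\tfrac{\pi}{4}$; and $\theta^+$ is undefined otherwise. Define $\hat\theta^-$, $\hat\theta^-_{\pi/2}$, $\theta^-$ in the same way with $s\to s_0^-$ in place of $s\to s_0^+$. *)

From Stdlib Require Import Reals Lra.
Open Scope R_scope.

(* angle of the line through the origin and (x,y), in (-PI/2, PI/2] *)
Definition theta_hat (x y : R) : R :=
  if Req_EM_T x 0 then PI / 2 else atan (y / x).

Definition rot1 (x y : R) : R := sqrt 2 / 2 * (x - y).
Definition rot2 (x y : R) : R := sqrt 2 / 2 * (x + y).

Definition right_lim (f : R -> R) (s0 L : R) : Prop :=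
  forall eps, 0 < eps -> exists delta, 0 < delta /\
    forall s, s0 < s < s0 + delta -> Rabs (f s - L) < eps.
Definition left_lim (f : R -> R) (s0 L : R) : Prop :=
  forall eps, 0 < eps -> exists delta, 0 < delta /\
    forall s, s0 - delta < s < s0 -> Rabs (f s - L) < eps.

Definition theta_plus (k1 k2 : R -> R) (s0 t : R) : Prop :=
  (right_lim (fun s => theta_hat (k1 s) (k2 s)) s0 t /\ - (PI / 2) < t < PI / 2)
  \/ (right_lim (fun s => theta_hat (rot1 (k1 s) (k2 s)) (rot2 (k1 s) (k2 s))) s0 (- (PI / 4))
      /\ t = PI / 2).
Definition theta_minus (k1 k2 : R -> R) (s0 t : R) : Prop :=
  (left_lim (fun s => theta_hat (k1 s) (k2 s)) s0 t /\ - (PI / 2) < t < PI / 2)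
  \/ (left_lim (fun s => theta_hat (rot1 (k1 s) (k2 s)) (rot2 (k1 s) (k2 s))) s0 (- (PI / 4))
      /\ t = PI / 2).

Definition is_open_interval (I : R -> Prop) : Prop :=
  (forall x, I x -> exists e, 0 < e /\ forall y, Rabs (y - x) < e -> I y) /\
  (forall x y z, I x -> I z -> x <= y <= z -> I y) /\
  (exists x, I x).

Definition continuous_on (D : R -> Prop) (f : R -> R) : Prop :=
  forall s, D s -> forall eps, 0 < eps -> exists delta, 0 < delta /\
    forall t, D t -> Rabs (t - s) < delta -> Rabs (f t - f s) < eps.

(* (i) -> (ii) [limits_of_polar_lift]: choose y in PI*Z with th s0 - y in
   (-PI/2, PI/2].  Since k = (r cos y) (cos (th - y), sin (th - y)), theta_hat(k)
   equals th - y near s0, so it tends to th s0 - y from both sides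
   ([punctured_lim_of_lift]).  If th s0 - y = PI/2, the rotated curve has the lift
   th + PI/4, and the same argument gives the limit -PI/4.
   (ii) -> (i) [polar_lift_of_limits]: if theta_hat(k) tends to t < PI/2, then
   k1 <> 0 near s0, and atan (k2/k1), extended by t at s0, is a continuous angle
   whose line contains k ([collinear_angle_of_limit]); the projection of k on that
   direction is then a continuous radius ([polar_lift_of_collinear]).  In the PI/2
   case one works with the rotated curve and rotates the angle back by -PI/4. *)
From Stdlib Require Import Reals Lra.
Open Scope R_scope.

Definition continuous_at (f : R -> R) (x : R) : Prop :=
  forall eps, 0 < eps -> exists d, 0 < d /\
    forall y, Rabs (y - x) < d -> Rabs (f y - f x) < eps.

(* It agrees with the library's [continuity_pt], whose closure lemmas we reuse. *)
Lemma continuity_pt_iff (f : R -> R) (x : R) : continuity_pt f x <-> continuous_at f x.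
Proof.
  unfold continuity_pt, continue_in, limit1_in, limit_in, D_x, no_cond, continuous_at;
    simpl; unfold Rdist; split.
  - intros H eps Heps. destruct (H eps Heps) as [d [Hd Hf]]. exists d; split; auto.
    intros y Hy. destruct (Req_dec x y) as [<-|Hne].
    + unfold Rminus; rewrite Rplus_opp_r, Rabs_R0; lra.
    + apply Hf; auto.
  - intros H eps Heps. destruct (H eps Heps) as [d [Hd Hf]]. exists d; split; auto.
    intros y [_ Hy]; apply Hf; auto.
Qed.

Definition open_set (U : R -> Prop) : Prop :=
  forall x, U x -> exists e, 0 < e /\ forall y, Rabs (y - x) < e -> U y.

Lemma ball_open (c e : R) : open_set (fun y => Rabs (y - c) < e).
Proof.
  intros x Hx. exists (e - Rabs (x - c)). split; [lra|].
  intros y Hy. assert (Rabs (y - c) <= Rabs (y - x) + Rabs (x - c)).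
  { replace (y - c) with ((y - x) + (x - c)) by ring. apply Rabs_triang. }
  lra.
Qed.

Lemma continuous_on_interior (U : R -> Prop) (f : R -> R) (x e : R) :
  continuous_on U f -> 0 < e -> (forall y, Rabs (y - x) < e -> U y) ->
  continuity_pt f x.
Proof.
  intros Hc He HU. apply continuity_pt_iff. intros eps Heps.
  assert (Ux : U x) by (apply HU; unfold Rminus; rewrite Rplus_opp_r, Rabs_R0; auto).
  destruct (Hc x Ux eps Heps) as [d [Hd Hf]].
  exists (Rmin d e); split; [apply Rmin_pos; auto|].
  intros y Hy. pose proof (Rmin_l d e). pose proof (Rmin_r d e).
  apply Hf; [apply HU|]; lra.
Qed.

Lemma continuous_on_open (U : R -> Prop) (f : R -> R) :
  open_set U -> continuous_on U f -> forall x, U x -> continuity_pt f x.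
Proof.
  intros HU Hc x Ux. destruct (HU x Ux) as [e [He HeU]].
  exact (continuous_on_interior U f x e Hc He HeU).
Qed.

Lemma continuous_on_of_pt (D : R -> Prop) (f : R -> R) :
  (forall x, D x -> continuity_pt f x) -> continuous_on D f.
Proof.
  intros H x Dx eps Heps. pose proof (proj1 (continuity_pt_iff f x) (H x Dx)) as Hx.
  destruct (Hx eps Heps) as [d [Hd Hf]]. exists d; split; auto.
Qed.

Definition punctured_lim (f : R -> R) (s0 L : R) : Prop :=
  forall eps, 0 < eps -> exists d, 0 < d /\
    forall s, s <> s0 -> Rabs (s - s0) < d -> Rabs (f s - L) < eps.

Lemma punctured_lim_iff (f : R -> R) (s0 L : R) :
  punctured_lim f s0 L <-> right_lim f s0 L /\ left_lim f s0 L.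
Proof.
  split.
  - intros H. split; intros eps Heps; destruct (H eps Heps) as [d [Hd Hf]];
      exists d; split; auto; intros s Hs; apply Hf; try lra; apply Rabs_def1; lra.
  - intros [Hr Hl] eps Heps. destruct (Hr eps Heps) as [d1 [Hd1 Hf1]].
    destruct (Hl eps Heps) as [d2 [Hd2 Hf2]].
    exists (Rmin d1 d2); split; [apply Rmin_pos; auto|].
    intros s Hne Hs. pose proof (Rmin_l d1 d2). pose proof (Rmin_r d1 d2).
    apply Rabs_def2 in Hs. destruct (Rlt_or_le s s0).
    + apply Hf2; lra.
    + apply Hf1. assert (s <> s0) by auto. lra.
Qed.

Definition extend (f : R -> R) (s0 L : R) (s : R) : R :=
  if Req_EM_T s s0 then L else f s.

Lemma extend_continuous (f : R -> R) (s0 L : R) :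
  punctured_lim f s0 L -> continuity_pt (extend f s0 L) s0.
Proof.
  intros H. apply continuity_pt_iff. intros eps Heps.
  destruct (H eps Heps) as [d [Hd Hf]]. exists d; split; auto.
  intros y Hy. unfold extend.
  destruct (Req_EM_T s0 s0) as [_|C]; [|congruence].
  destruct (Req_EM_T y s0) as [->|Hy0].
  - unfold Rminus; rewrite Rplus_opp_r, Rabs_R0; auto.
  - apply Hf; auto.
Qed.

Lemma theta_hat_axis (b : R) : theta_hat 0 b = PI / 2.
Proof. unfold theta_hat. destruct (Req_EM_T 0 0); [reflexivity|congruence]. Qed.

Lemma theta_hat_atan (a b : R) : a <> 0 -> theta_hat a b = atan (b / a).
Proof. intros Ha. unfold theta_hat. destruct (Req_EM_T a 0); [contradiction|reflexivity]. Qed.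

Lemma theta_hat_polar (r phi : R) :
  - (PI / 2) < phi < PI / 2 -> r <> 0 -> theta_hat (r * cos phi) (r * sin phi) = phi.
Proof.
  intros [H1 H2] Hr. pose proof (cos_gt_0 phi H1 H2) as Hc.
  assert (Hx : r * cos phi <> 0) by (intro E; apply Rmult_integral in E; lra).
  rewrite theta_hat_atan by exact Hx.
  replace (r * sin phi / (r * cos phi)) with (tan phi) by (unfold tan; field; lra).
  apply atan_tan; lra.
Qed.

(* Since [theta_hat] only sees lines, a polar angle may be shifted by a multiple of PI. *)
Lemma theta_hat_shifted (r phi y : R) :
  sin y = 0 -> - (PI / 2) < phi - y < PI / 2 ->
  ~ (r * cos phi = 0 /\ r * sin phi = 0) ->
  theta_hat (r * cos phi) (r * sin phi) = phi - y.
Proof.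
  intros Hy Hphi Hnz.
  assert (C : cos y * cos y = 1).
  { pose proof (sin2_cos2 y) as Q. unfold Rsqr in Q. rewrite Hy in Q. lra. }
  assert (Ec : r * cos phi = (r * cos y) * cos (phi - y)).
  { rewrite cos_minus, Hy. replace (r * cos phi) with (r * cos phi * (cos y * cos y)) at 1
      by (rewrite C; ring). ring. }
  assert (Es : r * sin phi = (r * cos y) * sin (phi - y)).
  { rewrite sin_minus, Hy. replace (r * sin phi) with (r * sin phi * (cos y * cos y)) at 1
      by (rewrite C; ring). ring. }
  rewrite Ec, Es. apply theta_hat_polar; [exact Hphi|].
  intro E. apply Hnz. rewrite Ec, Es, E. split; ring.
Qed.

Lemma angle_reduction (al : R) : exists y, sin y = 0 /\ - (PI / 2) < al - y <= PI / 2.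
Proof.
  pose proof PI_RGT_0 as HPI.
  set (q := - (al + PI / 2) / PI).
  exists (- IZR (up q) * PI). split.
  - rewrite <- opp_IZR. apply sin_eq_0_1. eexists; reflexivity.
  - destruct (archimed q) as [A1 A2].
    assert (Eq : q * PI = - (al + PI / 2)) by (unfold q; field; lra).
    split; nra.
Qed.

Lemma atan_collinear (a b : R) :
  a <> 0 -> a * sin (atan (b / a)) = b * cos (atan (b / a)).
Proof.
  intros Ha. pose proof (atan_bound (b / a)) as Hb.
  assert (Hc : 0 < cos (atan (b / a))) by (apply cos_gt_0; lra).
  pose proof (tan_atan (b / a)) as T. unfold tan in T.
  assert (Es : sin (atan (b / a)) = b / a * cos (atan (b / a))).
  { rewrite <- T at 2. field. lra. }
  rewrite Es. field. exact Ha.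
Qed.

Lemma polar_of_collinear (x y th : R) :
  x * sin th = y * cos th ->
  (x * cos th + y * sin th) * cos th = x /\ (x * cos th + y * sin th) * sin th = y.
Proof.
  intros E. pose proof (sin2_cos2 th) as Q. unfold Rsqr in Q. split.
  - replace ((x * cos th + y * sin th) * cos th)
      with (x * (sin th * sin th + cos th * cos th) + (y * cos th - x * sin th) * sin th) by ring.
    rewrite Q, E. ring.
  - replace ((x * cos th + y * sin th) * sin th)
      with (y * (sin th * sin th + cos th * cos th) + (x * sin th - y * cos th) * cos th) by ring.
    rewrite Q, E. ring.
Qed.

(* The coefficient sqrt 2 / 2 used in [rot1], [rot2] is cos (PI/4) = sin (PI/4). *)
Lemma cos_sin_PI4 : cos (PI / 4) = sqrt 2 / 2 /\ sin (PI / 4) = sqrt 2 / 2.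
Proof.
  assert (Hs : sqrt 2 * sqrt 2 = 2) by (apply sqrt_sqrt; lra).
  assert (E : 1 / sqrt 2 = sqrt 2 / 2).
  { assert (sqrt 2 <> 0) by (intro Z; rewrite Z in Hs; lra).
    replace (sqrt 2 / 2) with (sqrt 2 / (sqrt 2 * sqrt 2)) by (rewrite Hs; reflexivity).
    field; auto. }
  rewrite cos_PI4, sin_PI4, E. split; reflexivity.
Qed.

Lemma rot_polar (r th : R) :
  rot1 (r * cos th) (r * sin th) = r * cos (th + PI / 4) /\
  rot2 (r * cos th) (r * sin th) = r * sin (th + PI / 4).
Proof.
  destruct cos_sin_PI4 as [Ec Es]. unfold rot1, rot2.
  rewrite sin_plus, cos_plus, Ec, Es. split; ring.
Qed.

Lemma rot_collinear (x y th : R) :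
  rot1 x y * sin th = rot2 x y * cos th -> x * sin (th - PI / 4) = y * cos (th - PI / 4).
Proof.
  destruct cos_sin_PI4 as [Ec Es]. unfold rot1, rot2.
  rewrite sin_minus, cos_minus, Ec, Es. intro E. lra.
Qed.

Lemma rot_nonzero (x y : R) : ~ (x = 0 /\ y = 0) -> ~ (rot1 x y = 0 /\ rot2 x y = 0).
Proof.
  unfold rot1, rot2. intros H [E1 E2]. pose proof (sqrt_lt_R0 2 ltac:(lra)).
  apply Rmult_integral in E1. apply Rmult_integral in E2. apply H. lra.
Qed.

Lemma rot_continuous (k1 k2 : R -> R) (s : R) :
  continuity_pt k1 s -> continuity_pt k2 s ->
  continuity_pt (fun u => rot1 (k1 u) (k2 u)) s /\
  continuity_pt (fun u => rot2 (k1 u) (k2 u)) s.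
Proof.
  intros H1 H2. unfold rot1, rot2. split.
  - exact (continuity_pt_mult (fct_cte (sqrt 2 / 2)) (k1 - k2)%F s
      (continuity_pt_const (fct_cte (sqrt 2 / 2)) s (fun _ _ => eq_refl)) (continuity_pt_minus _ _ s H1 H2)).
  - exact (continuity_pt_mult (fct_cte (sqrt 2 / 2)) (k1 + k2)%F s
      (continuity_pt_const (fct_cte (sqrt 2 / 2)) s (fun _ _ => eq_refl)) (continuity_pt_plus _ _ s H1 H2)).
Qed.

Lemma punctured_lim_of_lift (a b r th : R -> R) (s0 e y : R) :
  0 < e ->
  (forall s, Rabs (s - s0) < e -> a s = r s * cos (th s) /\ b s = r s * sin (th s)) ->
  (forall s, Rabs (s - s0) < e -> s <> s0 -> ~ (a s = 0 /\ b s = 0)) ->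
  continuity_pt th s0 -> sin y = 0 -> - (PI / 2) < th s0 - y < PI / 2 ->
  punctured_lim (fun s => theta_hat (a s) (b s)) s0 (th s0 - y).
Proof.
  intros He Hpol Hnz Cth Hy Hrange eps Heps.
  set (m := Rmin eps (Rmin (PI / 2 - (th s0 - y)) (th s0 - y + PI / 2))).
  assert (Hm : 0 < m) by (unfold m; repeat apply Rmin_pos; lra).
  assert (m1 : m <= eps) by apply Rmin_l.
  assert (m2 : m <= PI / 2 - (th s0 - y))
    by (unfold m; eapply Rle_trans; [apply Rmin_r|apply Rmin_l]).
  assert (m3 : m <= th s0 - y + PI / 2)
    by (unfold m; eapply Rle_trans; [apply Rmin_r|apply Rmin_r]).
  destruct (proj1 (continuity_pt_iff th s0) Cth m Hm) as [d [Hd Hclose]].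
  exists (Rmin d e); split; [apply Rmin_pos; auto|].
  intros s Hne Hs. pose proof (Rmin_l d e). pose proof (Rmin_r d e).
  assert (Hth : Rabs (th s - th s0) < m) by (apply Hclose; lra).
  apply Rabs_def2 in Hth.
  destruct (Hpol s ltac:(lra)) as [Ea Eb].
  rewrite Ea, Eb, (theta_hat_shifted (r s) (th s) y Hy).
  - replace (th s - y - (th s0 - y)) with (th s - th s0) by ring. apply Rabs_def1; lra.
  - lra.
  - rewrite <- Ea, <- Eb. apply Hnz; [lra|exact Hne].
Qed.

Lemma nonvertical_near (a b : R -> R) (s0 t : R) :
  t < PI / 2 -> punctured_lim (fun s => theta_hat (a s) (b s)) s0 t ->
  exists d, 0 < d /\ forall s, s <> s0 -> Rabs (s - s0) < d -> a s <> 0.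
Proof.
  intros Ht Hlim. destruct (Hlim (PI / 2 - t) ltac:(lra)) as [d [Hd Hf]].
  exists d; split; [exact Hd|]. intros s Hne Hs E.
  specialize (Hf s Hne Hs). rewrite E, theta_hat_axis, Rabs_right in Hf; lra.
Qed.

(* Conversely, a limit [t] of [theta_hat (a, b)] yields a continuous angle near [s0]
   whose line contains the curve: [atan (b/a)] off [s0], extended by [t]. *)
Lemma collinear_angle_of_limit (U : R -> Prop) (a b : R -> R) (s0 t : R) :
  open_set U -> U s0 ->
  (forall s, U s -> continuity_pt a s) -> (forall s, U s -> continuity_pt b s) ->
  a s0 = 0 -> b s0 = 0 -> t < PI / 2 ->
  punctured_lim (fun s => theta_hat (a s) (b s)) s0 t ->
  exists e th, 0 < e /\ (forall s, Rabs (s - s0) < e -> U s) /\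
    continuous_on (fun s => Rabs (s - s0) < e) th /\
    forall s, Rabs (s - s0) < e -> a s * sin (th s) = b s * cos (th s).
Proof.
  intros HU Us0 Ca Cb a0 b0 Ht Hlim.
  destruct (nonvertical_near a b s0 t Ht Hlim) as [d [Hd Ha]].
  destruct (HU s0 Us0) as [e0 [He0 HeU]].
  pose proof (Rmin_l d e0). pose proof (Rmin_r d e0). set (e := Rmin d e0) in *.
  set (th := extend (fun s => theta_hat (a s) (b s)) s0 t).
  assert (Hth : forall s, s <> s0 -> Rabs (s - s0) < e -> th s = atan (b s / a s)).
  { intros s Hne Hs. unfold th, extend. destruct (Req_EM_T s s0); [contradiction|].
    apply theta_hat_atan, Ha; [exact Hne|lra]. }
  exists e, th. split; [apply Rmin_pos; auto|]. split; [intros s Hs; apply HeU; lra|].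
  split.
  - apply continuous_on_of_pt. intros x Hx. destruct (Req_dec x s0) as [->|Hne].
    + exact (extend_continuous _ _ _ Hlim).
    + destruct (ball_open s0 e x Hx) as [e1 [He1 He1e]].
      assert (Hx0 : 0 < Rabs (x - s0)) by (apply Rabs_pos_lt; lra).
      pose proof (Rmin_l e1 (Rabs (x - s0))). pose proof (Rmin_r e1 (Rabs (x - s0))).
      apply (continuity_pt_locally_ext (comp atan (b / a)%F) th (Rmin e1 (Rabs (x - s0)))).
      * apply Rmin_pos; auto.
      * intros y Hy. unfold Rdist in Hy.
        assert (y <> s0) by (intro E; subst y; rewrite Rabs_minus_sym in Hy; lra).
        symmetry. apply Hth; [assumption|apply He1e; lra].
      * assert (Ux : U x) by (apply HeU; lra).
        apply continuity_pt_comp.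
        -- apply continuity_pt_div; [apply Cb, Ux|apply Ca, Ux|apply Ha; [exact Hne|lra]].
        -- apply derivable_continuous_pt, derivable_pt_atan.
  - intros s Hs. destruct (Req_dec s s0) as [->|Hne].
    + rewrite a0, b0; ring.
    + rewrite Hth by auto. apply atan_collinear, Ha; [exact Hne|lra].
Qed.

Definition polar_lift (J : R -> Prop) (s0 : R) (k1 k2 : R -> R) : Prop :=
  exists (D : R -> Prop) (r th : R -> R),
    (forall s, D s -> J s) /\
    (exists e, 0 < e /\ forall s, Rabs (s - s0) < e -> D s) /\
    continuous_on D r /\ continuous_on D th /\
    (forall s, D s -> r s * cos (th s) = k1 s /\ r s * sin (th s) = k2 s).

(* A continuous angle whose line contains the curve gives a polar lift, the radius
   being the projection of the curve on the direction of the angle. *)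
Lemma polar_lift_of_collinear (J : R -> Prop) (s0 e : R) (k1 k2 th : R -> R) :
  (forall s, J s -> continuity_pt k1 s) -> (forall s, J s -> continuity_pt k2 s) ->
  0 < e -> (forall s, Rabs (s - s0) < e -> J s) ->
  continuous_on (fun s => Rabs (s - s0) < e) th ->
  (forall s, Rabs (s - s0) < e -> k1 s * sin (th s) = k2 s * cos (th s)) ->
  polar_lift J s0 k1 k2.
Proof.
  intros C1 C2 He HJ Cth E.
  exists (fun s => Rabs (s - s0) < e), (fun s => k1 s * cos (th s) + k2 s * sin (th s)), th.
  split; [exact HJ|]. split; [exists e; auto|]. split; [|split; [exact Cth|]].
  - apply continuous_on_of_pt. intros x Hx.
    pose proof (continuous_on_open _ th (ball_open s0 e) Cth x Hx) as Ct.
    exact (continuity_pt_plus _ _ x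
      (continuity_pt_mult _ _ x (C1 x (HJ x Hx)) (continuity_pt_comp _ _ x Ct (continuity_cos _)))
      (continuity_pt_mult _ _ x (C2 x (HJ x Hx)) (continuity_pt_comp _ _ x Ct (continuity_sin _)))).
  - intros s Hs. apply polar_of_collinear, E, Hs.
Qed.

Lemma limits_of_polar_lift (J : R -> Prop) (s0 : R) (k1 k2 : R -> R) :
  (forall s, J s -> s <> s0 -> ~ (k1 s = 0 /\ k2 s = 0)) ->
  polar_lift J s0 k1 k2 ->
  exists t, theta_plus k1 k2 s0 t /\ theta_minus k1 k2 s0 t.
Proof.
  intros Hnz [D [r [th [HDJ [[e [He HeD]] [_ [Cth Hpol]]]]]]].
  pose proof (continuous_on_interior D th s0 e Cth He HeD) as Cth0.
  assert (Hpol' : forall s, Rabs (s - s0) < e ->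
            k1 s = r s * cos (th s) /\ k2 s = r s * sin (th s)).
  { intros s Hs. destruct (Hpol s (HeD s Hs)); auto. }
  assert (Hnz' : forall s, Rabs (s - s0) < e -> s <> s0 -> ~ (k1 s = 0 /\ k2 s = 0)).
  { intros s Hs. apply Hnz, HDJ, HeD, Hs. }
  destruct (angle_reduction (th s0)) as [y [Hy [Hlo Hhi]]].
  destruct (Rlt_or_le (th s0 - y) (PI / 2)) as [Hlt|Hge].
  - exists (th s0 - y).
    pose proof (punctured_lim_of_lift k1 k2 r th s0 e y He Hpol' Hnz' Cth0 Hy (conj Hlo Hlt)) as L.
    apply punctured_lim_iff in L as [Lr Ll]. split; left; split; auto; lra.
  - (* th s0 - y = PI/2: the rotated lift th + PI/4 sits at -PI/4 modulo PI *)
    exists (PI / 2).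
    assert (L : punctured_lim
                  (fun s => theta_hat (rot1 (k1 s) (k2 s)) (rot2 (k1 s) (k2 s))) s0 (- (PI / 4))).
    { replace (- (PI / 4)) with ((th s0 + PI / 4) - (y + PI)) by lra.
      apply (punctured_lim_of_lift _ _ r (fun s => th s + PI / 4) s0 e (y + PI) He).
      - intros s Hs. destruct (Hpol' s Hs) as [E1 E2]. rewrite E1, E2. apply rot_polar.
      - intros s Hs Hne. apply rot_nonzero, Hnz'; assumption.
      - apply (continuity_pt_plus th (fct_cte (PI / 4))); [exact Cth0|].
        apply continuity_pt_const. intros u v; reflexivity.
      - rewrite neg_sin, Hy; ring.
      - lra. }
    apply punctured_lim_iff in L as [Lr Ll]. split; right; split; auto.
Qed.

Lemma polar_lift_of_limits (J : R -> Prop) (s0 : R) (k1 k2 : R -> R) :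
  open_set J -> J s0 ->
  (forall s, J s -> continuity_pt k1 s) -> (forall s, J s -> continuity_pt k2 s) ->
  k1 s0 = 0 -> k2 s0 = 0 ->
  (exists t, theta_plus k1 k2 s0 t /\ theta_minus k1 k2 s0 t) ->
  polar_lift J s0 k1 k2.
Proof.
  intros HJ Js0 C1 C2 z1 z2 [t [[[Hp Ht]|[Hp Ht]] [[Hm Ht']|[Hm Ht']]]]; try lra.
  - pose proof (proj2 (punctured_lim_iff _ _ _) (conj Hp Hm)) as L.
    destruct (collinear_angle_of_limit J k1 k2 s0 t HJ Js0 C1 C2 z1 z2 (proj2 Ht) L)
      as [e [th [He [HeJ [Cth E]]]]].
    exact (polar_lift_of_collinear J s0 e k1 k2 th C1 C2 He HeJ Cth E).
  - (* vertical limiting line: work with the rotated curve, then rotate back *)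
    pose proof (proj2 (punctured_lim_iff _ _ _) (conj Hp Hm)) as L.
    destruct (collinear_angle_of_limit J _ _ s0 (- (PI / 4)) HJ Js0
      (fun s Js => proj1 (rot_continuous k1 k2 s (C1 s Js) (C2 s Js)))
      (fun s Js => proj2 (rot_continuous k1 k2 s (C1 s Js) (C2 s Js))))
      as [e [th [He [HeJ [Cth E]]]]];
      [unfold rot1; rewrite z1, z2; ring|unfold rot2; rewrite z1, z2; ring
      |pose proof PI_RGT_0; lra|exact L|].
    apply (polar_lift_of_collinear J s0 e k1 k2 (fun s => th s - PI / 4) C1 C2 He HeJ).
    + apply continuous_on_of_pt. intros x Hx.
      apply (continuity_pt_minus th (fct_cte (PI / 4)));
        [exact (continuous_on_open _ th (ball_open s0 e) Cth x Hx)|].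
      apply continuity_pt_const. intros u v; reflexivity.
    + intros s Hs. apply rot_collinear, E, Hs.
Qed.

Theorem lemma1 (J : R -> Prop) (s0 : R) (k1 k2 : R -> R) :
  is_open_interval J -> J s0 ->
  continuous_on J k1 -> continuous_on J k2 ->
  k1 s0 = 0 -> k2 s0 = 0 ->
  (forall s, J s -> s <> s0 -> ~ (k1 s = 0 /\ k2 s = 0)) ->
  ((exists (D : R -> Prop) (r th : R -> R),
      (forall s, D s -> J s) /\
      (exists e, 0 < e /\ forall s, Rabs (s - s0) < e -> D s) /\
      continuous_on D r /\ continuous_on D th /\
      (forall s, D s -> r s * cos (th s) = k1 s /\ r s * sin (th s) = k2 s))
   <->
   (exists t, theta_plus k1 k2 s0 t /\ theta_minus k1 k2 s0 t)).
Proof.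
  intros [HJ _] Js0 C1 C2 z1 z2 Hnz.
  pose proof (continuous_on_open J k1 HJ C1) as P1.
  pose proof (continuous_on_open J k2 HJ C2) as P2.
  split.
  - exact (limits_of_polar_lift J s0 k1 k2 Hnz).
  - exact (polar_lift_of_limits J s0 k1 k2 HJ Js0 P1 P2 z1 z2).
Qed.
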